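(* Let $G$ be a Polish group and let $H\colon G \to [0,\infty]$ be a graded subgroup. Then the following are equivalent: (1) $\inf_{x \in G} H^\circ(x) = 0$; (2) $H$ is continuous; (3) $H$ is upper semi-continuous.
   Context: A graded subgroup of $G$ is a function $H\colon G \to [0,\infty]$ such that $H(1_G) = 0$, $H(x) = H(x^{-1})$ for all $x$, and $H(hg) \leq H(h) + H(g)$ for all $g,h \in G$. The interior $H^\circ$ is the function $H^\circ(x) = \limsup_{y \to x} H(y)$. Here $[0,\infty]$ carries the order topology. *)

From HB Require Import structures.
From mathcomp Require Import all_boot all_order all_algebra.
From mathcomp Require Import monoid.
From mathcomp Require Import all_classical all_reals all_analysis.
Set Implicit Arguments. Unset Strict Implicit. Unset Printing Implicit Defensive.
Import Order.TTheory GRing.Theory Num.Theory.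
Local Open Scope classical_set_scope.
Local Open Scope ring_scope.

#[short(type="groupTopType")]
HB.structure Definition GroupTop := {G of Group G & Topological G}.

Definition topological_group (G : groupTopType) : Prop :=
  continuous (fun p : G * G => monoid.mul p.1 p.2) /\
  continuous (@monoid.inv G).

Definition separable_space (T : topologicalType) : Prop :=
  exists D : set T, countable D /\ dense D.

Definition completely_metrizable (R : realType) (T : topologicalType) : Prop :=
  exists d : T -> T -> R,
    [/\ (forall x y, 0 <= d x y /\ (d x y = 0 <-> x = y)),
        (forall x y, d x y = d y x),
        (forall x y z, d x z <= d x y + d y z),
        (forall (x : T) (A : set T),
            nbhs x A <-> exists2 e : R, 0 < e & [set y | d x y < e] `<=` A) &
        (forall u : nat -> T,
            (forall e : R, 0 < e -> exists N : nat,
                forall m n : nat, (N <= m)%N -> (N <= n)%N -> d (u m) (u n) < e) ->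
            exists x : T, u @ \oo --> x)].

Definition polish_group (R : realType) (G : groupTopType) : Prop :=
  [/\ topological_group G, separable_space G & completely_metrizable R G].

Local Open Scope ereal_scope.

Definition graded_subgroup (R : realType) (G : groupTopType) (H : G -> \bar R) : Prop :=
  [/\ (forall x, 0 <= H x),
      H monoid.one = 0,
      (forall x, H x = H (monoid.inv x)) &
      (forall g h : G, H (monoid.mul h g) <= H h + H g)].

(* Interior H°(x) = limsup_{y -> x} H(y) = inf_{U nbhd of x} sup_{y in U} H(y). *)
Definition interior_grade (R : realType) (G : topologicalType) (H : G -> \bar R) (x : G)
  : \bar R := limf_esup H (nbhs x).

Definition upper_semicontinuous (R : realType) (T : topologicalType) (f : T -> \bar R) : Prop :=
  forall x (a : R), f x < a%:E ->
    exists2 V, nbhs x V & forall y, V y -> f y < a%:E.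

(** A graded subgroup is controlled near every point by its behaviour near the
    identity, since [H z] and [H x] differ by at most [H (z * x^-1)].  If some
    point has small interior, translating one of its neighbourhoods back to
    [1] and using subadditivity together with [H x = H x^-1] shows that [H] is
    small near [1]; this makes [H] continuous everywhere.  Conversely, upper
    semicontinuity at [1], where [H] vanishes, forces [H° 1] to be [0]. *)

From HB Require Import structures.
From mathcomp Require Import all_boot all_order all_algebra.
From mathcomp Require Import monoid.
From mathcomp Require Import all_classical all_reals all_analysis.
From mathcomp Require Import lra.
Set Implicit Arguments. Unset Strict Implicit. Unset Printing Implicit Defensive.
Import Order.TTheory GRing.Theory Num.Theory.
Local Open Scope classical_set_scope.
Local Open Scope ereal_scope.

Lemma nbhs_mulr (G : groupTopType) : topological_group G ->
  forall (a x : G) (V : set G),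
  nbhs (monoid.mul x a) V -> nbhs x [set z | V (monoid.mul z a)].
Proof.
move=> [mul_cont _] a x V.
have pair_cvg : (fun z : G => (z, a)) @ x --> (x, a).
  exact: cvg_pair cvg_id (cvg_cst a).
exact: (cvg_comp _ _ pair_cvg (mul_cont (x, a))).
Qed.

Lemma continuous_upper_semicontinuous (R : realType) (T : topologicalType)
  (f : T -> \bar R) : continuous f -> upper_semicontinuous f.
Proof.
move=> f_cont x a fx_lt; exists (f @^-1` [set y | y < a%:E]) => //.
apply: f_cont; apply: open_nbhs_nbhs; split => //.
exact: open_ereal_lt_ereal.
Qed.

Definition small_near_one (R : realType) (G : groupTopType) (H : G -> \bar R) :=
  forall e : R, (0 < e)%R -> \forall w \near monoid.one, H w < e%:E.

Section GradedSubgroup.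
Variables (R : realType) (G : groupTopType) (H : G -> \bar R).
Hypothesis G_topological : topological_group G.
Hypothesis H_ge0 : forall x, 0 <= H x.
Hypothesis H_one : H monoid.one = 0.
Hypothesis H_inv : forall x, H x = H (monoid.inv x).
Hypothesis H_mul : forall g h : G, H (monoid.mul h g) <= H h + H g.

Lemma grade_le_mulV (x z : G) : H z <= H (monoid.mul z (monoid.inv x)) + H x.
Proof. by rewrite -{1}(mulgVK x z); exact: H_mul. Qed.

Lemma grade_le_mulV_sym (x z : G) :
  H x <= H (monoid.mul z (monoid.inv x)) + H z.
Proof.
by rewrite -{1}(mulgVK z x) [H (monoid.mul z _)]H_inv invgF; exact: H_mul.
Qed.

Lemma small_near_one_translate (x : G) : small_near_one H ->
  forall e : R, (0 < e)%R ->
  \forall z \near x, H (monoid.mul z (monoid.inv x)) < e%:E.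
Proof.
move=> small e e0.
apply: (@nbhs_mulr _ G_topological (monoid.inv x) x (fun w => H w < e%:E)).
by rewrite mulgV; exact: small.
Qed.

Section ContinuityAt.
Variable x : G.
Hypothesis small : small_near_one H.

Lemma grade_cvg_fin (r : R) : H x = r%:E -> H @ x --> H x.
Proof.
move=> Hx; have near_x := small_near_one_translate x small.
rewrite Hx; apply/fine_cvgP; split.
  near=> z; rewrite ge0_fin_numE //.
  apply: (le_lt_trans (grade_le_mulV x z)); rewrite Hx.
  apply: lte_add_pinfty; last exact: ltry.
  by apply: (lt_trans _ (ltry 1%R)); near: z; exact: near_x.
apply/cvgrPdist_lt => e e0; near=> z.
have d_lt : H (monoid.mul z (monoid.inv x)) < e%:E by near: z; exact: near_x.
have d_fin : H (monoid.mul z (monoid.inv x)) \is a fin_num.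
  by rewrite ge0_fin_numE // (lt_trans d_lt) ?ltry.
have z_fin : H z \is a fin_num.
  rewrite ge0_fin_numE //; apply: (le_lt_trans (grade_le_mulV x z)).
  by rewrite Hx -(fineK d_fin) -EFinD ltry.
have := grade_le_mulV x z; have := grade_le_mulV_sym x z.
move: d_lt; rewrite Hx -(fineK d_fin) -(fineK z_fin) -!EFinD !lee_fin lte_fin.
rewrite ltr_norml /=; lra.
Unshelve. all: by end_near.
Qed.

Lemma grade_cvg_infty : H x = +oo -> H @ x --> H x.
Proof.
move=> Hx; rewrite Hx; apply/cvgeyPgt => A; near=> z.
suff -> : H z = +oo by exact: ltry.
have d_lt : H (monoid.mul z (monoid.inv x)) < 1%:E.
  by near: z; exact: small_near_one_translate.
apply/eqP; rewrite -leye_eq leNgt; apply/negP => z_lt.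
have := grade_le_mulV_sym x z; rewrite Hx leNgt => /negP; apply.
by apply: lte_add_pinfty => //; exact: lt_trans d_lt (ltry _).
Unshelve. all: by end_near.
Qed.

End ContinuityAt.

Lemma small_near_one_continuous : small_near_one H -> continuous H.
Proof.
move=> small x; case Hx: (H x) => [r| |].
- exact: grade_cvg_fin Hx.
- exact: grade_cvg_infty.
- by have := H_ge0 x; rewrite Hx.
Qed.

Lemma interior_inf0_small_near_one :
  ereal_inf (range (interior_grade H)) = 0 -> small_near_one H.
Proof.
move=> inf0 e e0.
have : ereal_inf (range (interior_grade H)) < (e / 2)%:E.
  by rewrite inf0 lte_fin divr_gt0.
move=> /ereal_inf_lt [_ [x _ <-]].
rewrite /interior_grade limf_esupE => /ereal_inf_lt [_ [V V_nbhs <-]] sup_lt.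
have V_lt y : V y -> H y < (e / 2)%:E.
  by move=> Vy; apply: le_lt_trans sup_lt; apply: ereal_sup_ubound; exists y.
have : \forall w \near monoid.one, V (monoid.mul w x).
  by apply: (@nbhs_mulr _ G_topological x monoid.one); rewrite mul1g.
apply: filterS => w Vwx.
rewrite -(mulgK x w); apply: (le_lt_trans (H_mul _ _)); rewrite -H_inv.
rewrite [e in e%:E](splitr e) EFinD lteD ?V_lt //; exact: nbhs_singleton.
Qed.

Lemma interior_grade_ge0 (x : G) : 0 <= interior_grade H x.
Proof. by apply: limf_esup_ge0 => //; exact: filter_not_empty. Qed.

Lemma interior_grade_one_le_usc (e : R) : upper_semicontinuous H ->
  (0 < e)%R -> interior_grade H monoid.one <= e%:E.
Proof.
move=> usc e0; have [|V V_nbhs V_lt] := usc monoid.one e.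
  by rewrite H_one lte_fin.
rewrite /interior_grade limf_esupE.
apply: (@le_trans _ _ (ereal_sup (H @` V))); first by apply: ereal_inf_lbound; exists V.
by apply: ge_ereal_sup => _ [y Vy <-]; exact/ltW/V_lt.
Qed.

Lemma upper_semicontinuous_interior_inf0 :
  upper_semicontinuous H -> ereal_inf (range (interior_grade H)) = 0.
Proof.
move=> usc; apply/eqP; rewrite eq_le; apply/andP; split.
  apply/lee_addgt0Pr => e e0; rewrite add0e.
  apply: le_trans (interior_grade_one_le_usc usc e0).
  by apply: ereal_inf_lbound; exists monoid.one.
by apply: le_ereal_inf_tmp => _ [x _ <-]; exact: interior_grade_ge0.
Qed.

End GradedSubgroup.

Theorem lemma3p9 (R : realType) (G : groupTopType) (H : G -> \bar R) :
  polish_group R G -> graded_subgroup H ->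
  [/\ (ereal_inf (range (interior_grade H)) = 0 <-> continuous H),
      (continuous H <-> upper_semicontinuous H) &
      (upper_semicontinuous H <-> ereal_inf (range (interior_grade H)) = 0)].
Proof.
move=> [G_top _ _] [H_ge0 H_one H_inv H_mul].
have inf0_cont : ereal_inf (range (interior_grade H)) = 0 -> continuous H.
  move=> /(interior_inf0_small_near_one G_top H_inv H_mul).
  exact: small_near_one_continuous G_top H_ge0 H_inv H_mul.
have cont_usc := @continuous_upper_semicontinuous R G H.
have usc_inf0 := upper_semicontinuous_interior_inf0 H_ge0 H_one.
split; split.
- exact: inf0_cont.
- by move/cont_usc/usc_inf0.
- exact: cont_usc.
- by move/usc_inf0/inf0_cont.
- exact: usc_inf0.
- by move/inf0_cont/cont_usc.
Qed.
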